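(* Let $R$ be a commutative ring with unit and $f\in R$ a non-nilpotent element. Then the map $\mathrm{res}\colon\mathrm{prim}(R[f^{-1}])\to\mathrm{prim}(R)$, $I\mapsto I\cap R$, induces a homeomorphism onto its image, which is compact in $\mathrm{prim}(R)$. Moreover, for any finite family of non-nilpotent elements $f_1,\dots,f_m\in R$ generating the unit ideal, the sets $\mathrm{res}(\mathrm{prim}(R[f_i^{-1}]))$, $i=1,\dots,m$, form a finite compact cover of $\mathrm{prim}(R)$.
   Context: $\mathrm{Id}(R)$ denotes the set of proper ideals of $R$, endowed with the constructible topology (induced by the product topology on $\{0,1\}^R$ via characteristic functions); it is compact. $\mathrm{prim}(R)$ is the closure in $\mathrm{Id}(R)$ of the set of primary ideals of $R$. $I\cap R$ means the preimage of $I$ under the canonical map $R\to R[f^{-1}]$. *)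

From HB Require Import structures.
From mathcomp Require Import all_boot all_order all_algebra.
From mathcomp Require Import ring_quotient.
From mathcomp Require Import all_classical all_reals all_analysis.



Unset Printing Implicit Defensive.

Import Order.TTheory GRing.Theory Num.Theory.
Local Open Scope classical_set_scope.
Local Open Scope ring_scope.

(* Subsets of a ring R are encoded by their characteristic functions
   R -> bool, i.e. points of {0,1}^R.  The type {ptws R -> bool} carries the
   product topology (bool being discrete), so the induced topology on the set
   of ideals is the constructible topology of the paper. *)

Definition nilpotent_elt (R : comNzRingType) (x : R) : Prop :=
  exists n : nat, x ^+ n = 0.

(* Id(R): the proper ideals of R (mathcomp's idealr_closed includes 1 \notin I) *)
Definition Id_set (R : comNzRingType) : set {ptws R -> bool} :=
  [set I | @idealr_closed R (I : {pred R})].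

Definition primary_ideal (R : comNzRingType) (I : {pred R}) : Prop :=
  @idealr_closed R I /\
  forall a b : R, a * b \in I -> a \notin I -> exists n : nat, b ^+ n \in I.

Definition primary_set (R : comNzRingType) : set {ptws R -> bool} :=
  [set I | primary_ideal R (I : {pred R})].

Definition prim (R : comNzRingType) : set {ptws R -> bool} :=
  topology_structure.closure (primary_set R) `&` Id_set R.

(* phi : R -> S exhibits S as the localization R[f^{-1}]
   (standard characterization of the localization up to unique isomorphism):
   phi f is a unit, every element of S is phi r / phi f^n, and
   ker phi = { r | f^n r = 0 for some n }. *)
Definition is_localization (R S : comNzRingType) (f : R)
    (phi : {rmorphism R -> S}) : Prop :=
  [/\ exists u : S, phi f * u = 1,
      forall s : S, exists (r : R) (n : nat), s * phi f ^+ n = phi r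
    & forall r : R, phi r = 0 -> exists n : nat, f ^+ n * r = 0].

(* res : I |-> I \cap R, the preimage of I under R -> R[f^{-1}] *)
Definition res (R S : comNzRingType) (phi : {rmorphism R -> S})
    (I : {ptws S -> bool}) : {ptws R -> bool} :=
  fun r : R => I (phi r).

Arguments nilpotent_elt {R} x.
Arguments is_localization {R S} f phi.
Arguments res {R S} phi I.

From HB Require Import structures.
From mathcomp Require Import all_boot all_order all_algebra.
From mathcomp Require Import ring_quotient.
From mathcomp Require Import all_classical all_reals all_analysis.

Import Order.TTheory GRing.Theory Num.Theory.
Local Open Scope classical_set_scope.
Local Open Scope ring_scope.

Set Implicit Arguments.
Unset Strict Implicit.

(* Contraction along phi : R -> R[1/f] is continuous for the constructible
   topology (each coordinate of res phi J is a coordinate of J) and maps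
   primary ideals to primary ideals, hence prim(R[1/f]) into the closure of
   the primary ideals of R.  Since prim is a closed subset of the compact
   Hausdorff space {0,1}^R, its images are compact and closed.  An ideal J of
   R[1/f] is recovered from J \cap R by a continuous map: s \in J iff
   num s \in J \cap R, where s f^n = num s.  For the cover, a primary ideal Q
   of R cannot contain a power of every f_i, since the f_i generate the unit
   ideal; if no power of f_i lies in Q, the extension Q R[1/f_i] is primary
   and contracts back to Q.  So the finite union of the closed images contains
   all primary ideals of R, hence their closure prim(R). *)

Section IdealArithmetic.
Variables (R : comNzRingType) (I : {pred R}).
Hypothesis idI : idealr_closed I.

Lemma ideal0 : 0 \in I.
Proof. by case: idI. Qed.

Lemma idealMl a u : u \in I -> a * u \in I.
Proof. by case: idI => I0 _ IMD uI; rewrite -[a * u]addr0; apply: IMD. Qed.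

Lemma idealMr a u : u \in I -> u * a \in I.
Proof. by rewrite mulrC; apply: idealMl. Qed.

Lemma idealD u v : u \in I -> v \in I -> u + v \in I.
Proof. by case: idI => _ _ IMD uI vI; rewrite -[u]mul1r; apply: IMD. Qed.

Lemma idealX_leq x n m : x ^+ n \in I -> (n <= m)%N -> x ^+ m \in I.
Proof. by move=> xnI /subnK <-; rewrite exprD idealMl. Qed.

Lemma radical_idealD x y :
  (exists n, x ^+ n \in I) -> (exists n, y ^+ n \in I) ->
  exists n, (x + y) ^+ n \in I.
Proof.
move=> [n xnI] [m ymI]; exists (n + m)%N; rewrite exprDn.
apply: (big_ind (fun z => z \in I)); [exact: ideal0 | exact: idealD |] => i _.
rewrite -mulr_natl; apply: idealMl; have [mi | im] := leqP m i.
  by apply: idealMl; apply: idealX_leq ymI mi.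
apply: idealMr; apply: idealX_leq xnI _.
by rewrite -{1}(addnK m n) leq_sub2l // ltnW.
Qed.

Lemma unit_combination_not_radical m (fs a : 'I_m -> R) :
  \sum_(i < m) a i * fs i = 1 -> exists i, forall n, fs i ^+ n \notin I.
Proof.
move=> comb1; apply: contrapT => /forallNP noI.
have : exists n, (\sum_(i < m) a i * fs i) ^+ n \in I.
  apply: (big_ind (fun z => exists n, z ^+ n \in I)).
  - by exists 1%N; rewrite expr1 ideal0.
  - exact: radical_idealD.
  move=> i _; have /existsNP [n /negP/negPn fsnI] := noI i.
  by exists n; rewrite exprMn idealMl.
by rewrite comb1 => -[n]; rewrite expr1n; apply/negP; case: idI.
Qed.

End IdealArithmetic.

Section PointwiseTopology.
Variable I : eqType.

Lemma ptws_bool_precomp_continuous (J : eqType) (h : J -> I) :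
  continuous
    (fun F : {ptws I -> bool} => (fun j => F (h j)) : {ptws J -> bool}).
Proof.
move=> F; apply/cvg_sup => j.
have := @continuous_comp_initial _ _ _ (fun G : {ptws J -> bool} => G j)
  (fun F : {ptws I -> bool} => (fun j => F (h j)) : {ptws J -> bool}).
by apply; exact: (@proj_continuous I (fun=> bool) (h j)).
Qed.

Lemma ptws_coord_closed (i : I) (b : bool) :
  closed [set F : {ptws I -> bool} | F i = b].
Proof.
apply: (proj1 (continuous_closedP _) _ [set b] (discrete_closed _)) => F.
exact: (@proj_continuous I (fun=> bool) i).
Qed.

Lemma ptws_bool_compact : compact [set: {ptws I -> bool}].
Proof.
have := @tychonoff I (fun=> bool) (fun=> setT) (fun=> bool_compact).
by congr compact; apply/seteqP; split.
Qed.

Lemma ptws_bool_hausdorff : hausdorff_space {ptws I -> bool}.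
Proof. by apply: hausdorff_product => _; exact: discrete_hausdorff. Qed.

End PointwiseTopology.

Lemma image_closure_subset (T U : topologicalType) (h : T -> U) (A : set T) :
  continuous h -> h @` closure A `<=` closure (h @` A).
Proof.
move=> hC _ [x clAx <-] N hxN.
have [y [Ay Ny]] := clAx _ (hC x _ hxN).
by exists (h y); split => //; exists y.
Qed.

Lemma Id_setE (R : comNzRingType) : Id_set R =
  [set I | I 0 = true] `&` [set I | I 1 = false] `&`
  \bigcap_(t in [set: R * R * R])
    ([set I | I t.1.2 = false] `|` [set I | I t.2 = false] `|`
     [set I | I (t.1.1 * t.1.2 + t.2) = true]).
Proof.
apply/seteqP; split => I.
  case=> I0 /negbTE I1 IMD; split=> // -[[a u] v] _ /=.
  case: (boolP (I u)) => [uI|/negbTE]; last by left; left.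
  case: (boolP (I v)) => [vI|/negbTE]; last by left; right.
  by right; apply: IMD.
case=> -[/= I0 I1] IMD; split=> [//||a u v]; first exact/negbT.
rewrite !unfold_in => uI vI.
by have [[]|] := IMD (a, u, v) Logic.I; rewrite /= ?uI ?vI.
Qed.

Lemma Id_set_closed (R : comNzRingType) : closed (Id_set R).
Proof.
rewrite Id_setE; apply: closedI; first apply: closedI.
- exact: ptws_coord_closed.
- exact: ptws_coord_closed.
apply: closed_bigI => t _.
by apply: closedU; first apply: closedU; exact: ptws_coord_closed.
Qed.

Lemma prim_compact (R : comNzRingType) : compact (prim R).
Proof.
apply: (subclosed_compact _ (@ptws_bool_compact R)) => //.
by apply: closedI; [exact: closed_closure | exact: Id_set_closed].
Qed.

Lemma primary_prim (R : comNzRingType) (Q : {ptws R -> bool}) :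
  primary_ideal R Q -> prim R Q.
Proof. by move=> primQ; split; [exact: subset_closure | case: primQ]. Qed.

Section Contraction.
Variables (R S : comNzRingType) (phi : {rmorphism R -> S}).

Lemma res_ideal (J : {ptws S -> bool}) :
  idealr_closed (J : {pred S}) -> idealr_closed (res phi J : {pred R}).
Proof.
case=> J0 J1 JMD; split; first by rewrite unfold_in /res rmorph0.
  by rewrite unfold_in /res rmorph1.
by move=> a u v uJ vJ; rewrite unfold_in /res rmorphD rmorphM; apply: JMD.
Qed.

Lemma res_primary (J : {ptws S -> bool}) :
  primary_ideal S J -> primary_ideal R (res phi J).
Proof.
case=> idJ primJ; split; first exact: res_ideal.
move=> a b; rewrite !unfold_in /res rmorphM => abJ aJ.
by have [n bnJ] := primJ _ _ abJ aJ; exists n; rewrite unfold_in /res rmorphXn.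
Qed.

Lemma res_continuous : continuous (res phi).
Proof. exact: ptws_bool_precomp_continuous. Qed.

Lemma res_prim : res phi @` prim S `<=` prim R.
Proof.
move=> _ [J [clJ idJ] <-]; split; last exact: res_ideal.
have res_primary_set : res phi @` primary_set S `<=` primary_set R.
  by move=> _ [Q primQ <-]; exact: res_primary.
apply: (closureS res_primary_set).
by apply: (image_closure_subset (A := primary_set S) res_continuous); exists J.
Qed.

Lemma res_prim_compact : compact (res phi @` prim S).
Proof.
apply: continuous_compact; last exact: prim_compact.
exact/continuous_subspaceT/res_continuous.
Qed.

End Contraction.

Section Localization.
Variables (R S : comNzRingType) (f : R) (phi : {rmorphism R -> S}).
Hypothesis locS : is_localization f phi.

Lemma localization_eq r n r' : phi r * phi f ^+ n = phi r' ->
  exists k, f ^+ (k + n) * r = f ^+ k * r'.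
Proof.
case: locS => _ _ kerS e.
have [k fk0] : exists k, f ^+ k * (r * f ^+ n - r') = 0.
  by apply: kerS; rewrite rmorphB rmorphM rmorphXn e subrr.
by exists k; apply/eqP; rewrite -subr_eq0 -fk0 mulrBr exprD -mulrA [r * _]mulrC.
Qed.

Lemma localization_retraction :
  exists g : {ptws R -> bool} -> {ptws S -> bool},
    (forall J : {ptws S -> bool},
       idealr_closed (J : {pred S}) -> g (res phi J) = J)
    /\ continuous g.
Proof.
case: locS => [[u fu1] fracS _].
pose num s := projT1 (cid (fracS s)).
have numP s : exists n, s * phi f ^+ n = phi (num s) := projT2 (cid (fracS s)).
exists (fun J => (fun s => J (num s)) : {ptws S -> bool}).
split; last exact: ptws_bool_precomp_continuous.
move=> J idJ; apply: funext => s /=; have [n e] := numP s; rewrite /res -e.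
apply/idP/idP => [sfJ|]; last exact: idealMr.
have := idealMl idJ (u ^+ n) sfJ.
by rewrite mulrCA -exprMn [u * _]mulrC fu1 expr1n mulr1.
Qed.

Variable Q : {pred R}.
Hypothesis primQ : primary_ideal R Q.
Hypothesis Q_powf : forall n, f ^+ n \notin Q.

Lemma primary_cancel_powf k r : f ^+ k * r \in Q -> r \in Q.
Proof.
case: primQ => _ primQ' fkrQ; apply: contraT => rQ.
rewrite mulrC in fkrQ; have [n] := primQ' _ _ fkrQ rQ.
by rewrite -exprM (negbTE (Q_powf _)).
Qed.

Definition ext_ideal : {pred S} :=
  fun s => `[< exists r n, r \in Q /\ s * phi f ^+ n = phi r >].

Lemma ext_idealP s :
  reflect (exists r n, r \in Q /\ s * phi f ^+ n = phi r) (s \in ext_ideal).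
Proof. exact: asboolP. Qed.

Lemma ext_ideal_res r : (phi r \in ext_ideal) = (r \in Q).
Proof.
apply/ext_idealP/idP => [[r' [n [r'Q e]]] | rQ]; last first.
  by exists r, 0%N; rewrite expr0 mulr1.
have [k fkr] := localization_eq e.
apply: (@primary_cancel_powf (k + n)); rewrite fkr.
by case: primQ => idQ _; exact: idealMl.
Qed.

Lemma ext_ideal_ideal : idealr_closed ext_ideal.
Proof.
case: primQ => idQ _; case: locS => _ fracS _; split.
- apply/ext_idealP; exists 0, 0%N.
  by rewrite mul0r rmorph0; split; first exact: ideal0.
- by rewrite -(rmorph1 phi) ext_ideal_res; case: idQ.
move=> a x y /ext_idealP [r1 [n1 [r1Q e1]]] /ext_idealP [r2 [n2 [r2Q e2]]].
have [t [p ep]] := fracS a.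
apply/ext_idealP.
exists (t * r1 * f ^+ n2 + r2 * f ^+ (p + n1)), (p + n1 + n2)%N.
split; first by apply: (idealD idQ); [apply/(idealMr idQ)/(idealMl idQ) |
                                     apply: (idealMr idQ)].
rewrite rmorphD !rmorphM !rmorphXn -ep -e1 -e2 !exprD mulrDl.
set A := phi f ^+ p; set B := phi f ^+ n1; set C := phi f ^+ n2.
by congr (_ + _);
  [rewrite [a * A * _]mulrACA mulrA | rewrite -[RHS]mulrA [C * _]mulrC].
Qed.

Lemma ext_ideal_primary : primary_ideal S ext_ideal.
Proof.
split; first exact: ext_ideal_ideal.
case: primQ => idQ primQ'; case: locS => _ fracS _.
move=> a b /ext_idealP [r [n [rQ e]]] aQ.
have [x [p ex]] := fracS a; have [y [q ey]] := fracS b.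
have exy : phi (x * y) * phi f ^+ n = phi (r * f ^+ (p + q)).
  rewrite !rmorphM rmorphXn -ex -ey -e exprD.
  set A := phi f ^+ p; set B := phi f ^+ q; set C := phi f ^+ n.
  by rewrite mulrACA -!mulrA; congr (_ * (_ * _)); rewrite mulrA mulrC.
have [k fkxy] := localization_eq exy.
have xQ : x \notin Q.
  by apply: contra aQ => xQ; apply/ext_idealP; exists x, p.
have xyfQ : x * (y * f ^+ (n + k)) \in Q.
  by rewrite mulrA mulrC addnC fkxy; apply/(idealMl idQ)/(idealMr idQ).
have [N yfNQ] := primQ' _ _ xyfQ xQ.
exists N; apply/ext_idealP.
exists (y ^+ N * f ^+ ((n + k) * N)), (q * N + (n + k) * N)%N.
split; first by rewrite exprM -exprMn.
by rewrite rmorphM !rmorphXn exprD mulrA exprM -exprMn ey.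
Qed.

Lemma primary_in_res_prim : (res phi @` prim S) (Q : {ptws R -> bool}).
Proof.
exists (ext_ideal : {ptws S -> bool}).
  exact/primary_prim/ext_ideal_primary.
by apply: funext => r; exact: ext_ideal_res.
Qed.

End Localization.

Lemma prim_cover (R : comNzRingType) (m : nat) (fs : 'I_m -> R)
    (S : 'I_m -> comNzRingType) (phi : forall i, {rmorphism R -> S i})
    (a : 'I_m -> R) :
  (forall i, is_localization (fs i) (phi i)) -> \sum_(i < m) a i * fs i = 1 ->
  prim R = \bigcup_(i in [set: 'I_m]) (res (phi i) @` prim (S i)).
Proof.
move=> locS comb1; set U := \bigcup_(i in _) _.
apply/seteqP; split; last by move=> J [i _]; apply: res_prim.
have U_closed : closed U.
  apply: closed_bigcup => [|i _]; first exact: finite_finset.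
  apply: compact_closed; first exact: ptws_bool_hausdorff.
  exact: res_prim_compact.
have primary_U : primary_set R `<=` U.
  move=> Q primQ.
  have [i fsiQ] := unit_combination_not_radical (proj1 primQ) comb1.
  by exists i => //; apply: primary_in_res_prim.
move=> J [clJ _]; rewrite (proj1 (closure_id U) U_closed).
exact: closureS primary_U _ clJ.
Qed.

Unset Implicit Arguments.

Theorem proposition5p10 (R : comNzRingType) :
  (forall (f : R) (S : comNzRingType) (phi : {rmorphism R -> S}),
     ~ nilpotent_elt f -> is_localization f phi ->
     [/\ res phi @` prim S `<=` prim R,
         {within prim S, continuous (res phi)},
         (exists g : {ptws R -> bool} -> {ptws S -> bool},
            (forall I, prim S I -> g (res phi I) = I) /\
            {within res phi @` prim S, continuous g})
       & compact (res phi @` prim S)]) /\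
  (forall (m : nat) (fs : 'I_m -> R) (S : 'I_m -> comNzRingType)
          (phi : forall i : 'I_m, {rmorphism R -> S i}),
     (forall i, ~ nilpotent_elt (fs i)) ->
     (forall i, is_localization (fs i) (phi i)) ->
     (exists a : 'I_m -> R, \sum_(i < m) a i * fs i = 1) ->
     (forall i, compact (res (phi i) @` prim (S i))) /\
     prim R = \bigcup_(i in [set: 'I_m]) (res (phi i) @` prim (S i))).
Proof.
split=> [f S phi _ locS | m fs S phi _ locS [a comb1]].
  have [g [gK gC]] := localization_retraction locS.
  split; [exact: res_prim | exact/continuous_subspaceT/res_continuous | |
          exact: res_prim_compact].
  by exists g; split=> [J [_ /gK]|]; last exact/continuous_subspaceT/gC.
by split=> [i|]; [exact: res_prim_compact | exact: prim_cover comb1].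
Qed.
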